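(* Assume the Standing Setting. Let $\phi\colon\mathbb{R}^{\mathfrak d}\times[a,b]^d\to\mathbb{R}$ be locally bounded and measurable and assume that for all $r\in(0,\infty)$ $$\sup_{\theta,\vartheta\in\mathbb{R}^{\mathfrak d},\ \|\theta\|+\|\vartheta\|\le r,\ \theta\ne\vartheta}\ \sup_{x\in[a,b]^d}\frac{|\phi(\theta,x)-\phi(\vartheta,x)|}{\|\theta-\vartheta\|}<\infty.$$ Then (i) the map $\mathbb{R}^{\mathfrak d}\ni\theta\mapsto\int_{[a,b]^d}\phi(\theta,x)p(x)\,\lambda(\mathrm{d}x)\in\mathbb{R}$ is locally Lipschitz continuous, and (ii) for every $i\in\{1,\dots,H\}$ the map $\{\vartheta\in\mathbb{R}^{\mathfrak d}\colon i\notin\mathbf{D}^\vartheta\}\ni\theta\mapsto\int_{I_i^\theta}\phi(\theta,x)p(x)\,\lambda(\mathrm{d}x)\in\mathbb{R}$ is locally Lipschitz continuous.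
   Context: Standing Setting: Let $d,H,\mathfrak d\in\mathbb{N}$ with $\mathfrak d=dH+2H+1$, let $a\in\mathbb{R}$, $b\in(a,\infty)$, $f\in C([a,b]^d,\mathbb{R})$, and let $p\colon[a,b]^d\to[0,\infty)$ be bounded and measurable. Let $\lambda$ be Lebesgue measure on $\mathbb{R}^d$ and $\|\cdot\|$ the Euclidean norm. For $\theta=(\theta_1,\dots,\theta_{\mathfrak d})\in\mathbb{R}^{\mathfrak d}$, $i\in\{1,\dots,H\}$, $j\in\{1,\dots,d\}$ write $w^\theta_{i,j}=\theta_{(i-1)d+j}$, $b^\theta_i=\theta_{Hd+i}$, $v^\theta_i=\theta_{H(d+1)+i}$, $c^\theta=\theta_{\mathfrak d}$. Define $\mathcal N^\theta(x)=c^\theta+\sum_{i=1}^H v^\theta_i\max\{b^\theta_i+\sum_{j=1}^d w^\theta_{i,j}x_j,0\}$ for $x\in\mathbb{R}^d$ and the risk $\mathcal L(\theta)=\int_{[a,b]^d}(f(y)-\mathcal N^\theta(y))^2p(y)\,\lambda(\mathrm{d}y)$. Let $\mathfrak R_r\in C^1(\mathbb{R},\mathbb{R})$, $r\in\mathbb{N}$, satisfy for all $x\in\mathbb{R}$ that $\lim_{r\to\infty}\big(|\mathfrak R_r(x)-\max\{x,0\}|+|(\mathfrak R_r)'(x)-\mathbb 1_{(0,\infty)}(x)|\big)=0$ and $\sup_{r\in\mathbb{N}}\sup_{y\in[-|x|,|x|]}|(\mathfrak R_r)'(y)|<\infty$, and let $\mathfrak L_r(\theta)=\int_{[a,b]^d}\big(f(y)-c^\theta-\sum_{i=1}^H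 v^\theta_i\,\mathfrak R_r(b^\theta_i+\sum_{j=1}^d w^\theta_{i,j}y_j)\big)^2p(y)\,\lambda(\mathrm{d}y)$. Let $\mathcal G=(\mathcal G_1,\dots,\mathcal G_{\mathfrak d})\colon\mathbb{R}^{\mathfrak d}\to\mathbb{R}^{\mathfrak d}$ satisfy $\mathcal G(\theta)=\lim_{r\to\infty}(\nabla\mathfrak L_r)(\theta)$ for every $\theta$ at which this limit exists. For $\theta\in\mathbb{R}^{\mathfrak d}$, $i\in\{1,\dots,H\}$ let $I_i^\theta=\{x\in[a,b]^d\colon b^\theta_i+\sum_{j=1}^d w^\theta_{i,j}x_j>0\}$ and let $\mathbf D^\theta=\{i\in\{1,\dots,H\}\colon |b^\theta_i|+\sum_{j=1}^d|w^\theta_{i,j}|=0\}$ (the set of degenerate hidden neurons). For $\varepsilon>0$, $B_\varepsilon(\theta)=\{\vartheta\in\mathbb{R}^{\mathfrak d}\colon\|\theta-\vartheta\|<\varepsilon\}$. *)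

From HB Require Import structures.
From mathcomp Require Import all_boot all_order all_algebra.
From mathcomp Require Import all_classical all_reals all_analysis.
Set Implicit Arguments. Unset Strict Implicit. Unset Printing Implicit Defensive.
Import Order.TTheory GRing.Theory Num.Theory.
Local Open Scope classical_set_scope.
Local Open Scope ring_scope.

Section Defs.
Variable R : realType.

Definition npar (d H : nat) : nat := (d * H + 2 * H + 1)%N.

Definition eucl_dist (n : nat) (t s : n.-tuple R) : R :=
  Num.sqrt (\sum_(k < n) (tnth t k - tnth s k) ^+ 2).

Definition eucl_norm (n : nat) (t : n.-tuple R) : R :=
  Num.sqrt (\sum_(k < n) (tnth t k) ^+ 2).

Definition cube (d : nat) (a b : R) : set (d.-tuple R) :=
  [set x | forall j : 'I_d, a <= tnth x j <= b].

Definition box (d : nat) (l u : d.-tuple R) : set (d.-tuple R) :=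
  [set x | forall j : 'I_d, tnth l j <= tnth x j <= tnth u j].

(* mu is the Lebesgue measure on (the Borel sets of) R^d: it gives every
   closed box its volume (this determines mu uniquely) *)
Definition is_lebesgue (d : nat)
    (mu : {measure set (d.-tuple R) -> \bar R}) : Prop :=
  forall l u : d.-tuple R, (forall j : 'I_d, tnth l j <= tnth u j) ->
    mu (box l u) = (\prod_(j < d) (tnth u j - tnth l j))%:E.

(* coordinates of theta (0-based); indices below are always in range *)
Definition coord (n : nat) (th : n.-tuple R) (k : nat) : R := nth 0 th k.

(* 0-based versions: hidden neuron i : 'I_H, input coordinate j : 'I_d
   w^theta_{i+1,j+1} = theta_{i d + j + 1}  (1-based) = coord th (i*d + j) *)
Definition wgt (d H : nat) (th : (npar d H).-tuple R) (i : 'I_H) (j : 'I_d) : R :=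
  coord th (i * d + j)%N.
Definition bias (d H : nat) (th : (npar d H).-tuple R) (i : 'I_H) : R :=
  coord th (H * d + i)%N.
Definition outw (d H : nat) (th : (npar d H).-tuple R) (i : 'I_H) : R :=
  coord th (H * (d + 1) + i)%N.
Definition outb (d H : nat) (th : (npar d H).-tuple R) : R :=
  coord th (npar d H).-1.

Definition Iset (d H : nat) (a b : R) (th : (npar d H).-tuple R) (i : 'I_H)
  : set (d.-tuple R) :=
  [set x | cube a b x /\ 0 < bias th i + \sum_(j < d) wgt th i j * tnth x j].

Definition degenerate (d H : nat) (th : (npar d H).-tuple R) (i : 'I_H) : Prop :=
  `|bias th i| + \sum_(j < d) `|wgt th i j| = 0.

Definition locally_lipschitz_on (n : nat) (U : set (n.-tuple R))
    (F : n.-tuple R -> R) : Prop :=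
  forall th, U th -> exists eps : R, 0 < eps /\ exists L : R,
    forall th1 th2, U th1 -> U th2 -> eucl_dist th1 th < eps -> eucl_dist th2 th < eps ->
      `|F th1 - F th2| <= L * eucl_dist th1 th2.

End Defs.

From Pilot Require Import Defs.
From mathcomp Require Import all_boot all_order all_algebra.
From mathcomp Require Import all_classical all_reals all_analysis.
From mathcomp Require Import finmap measurable_realfun.
From mathcomp.algebra_tactics Require Import ring lra.
Import Order.TTheory GRing.Theory Num.Theory.
Import numFieldNormedType.Exports.
Local Open Scope classical_set_scope.
Local Open Scope ring_scope.
Set Implicit Arguments. Unset Strict Implicit. Unset Printing Implicit Defensive.

(** The integrand [f_th x = phi (th, x) * p x] is, near every [th0], bounded and
Lipschitz in [th] uniformly in [x] in the cube (compactness of the cube upgrades the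
local boundedness of [phi] to a bound uniform in [x]), and the cube has finite
measure; this gives (i). In (ii) the domain moves as well:
  int_{I th1} f_th1 - int_{I th2} f_th2
    = int_{I th1} (f_th1 - f_th2) + int_{I th1 \ I th2} f_th2 - int_{I th2 \ I th1} f_th2,
so it suffices that [mu (I th1 \ I th2) <= C |th1 - th2|] near a non-degenerate [th].
On [I th1 \ I th2] the preactivation of [th1] is positive and that of [th2] is not,
hence it is at most [B |th1 - th2|] there. If some inner weight [w_ij] is nonzero,
such a slab has volume [O(|th1 - th2| / |w_ij|)] (cover it by a grid of boxes that
are thin in direction [j]); otherwise the bias is nonzero and [I th] does not move
near [th]. *)

Lemma sqrt_sum_sqr_le_l1 (R : realType) (n : nat) (f : 'I_n -> R) :
  Num.sqrt (\sum_(k < n) f k ^+ 2) <= \sum_(k < n) `|f k|.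
Proof.
have l1_ge0 : 0 <= \sum_(k < n) `|f k| by apply: sumr_ge0.
rewrite -(ger0_norm l1_ge0) -sqrtr_sqr; apply: ler_wsqrtr.
rewrite expr2 mulr_suml; apply: ler_sum => k _.
rewrite -real_normK ?num_real // expr2 ler_wpM2l //.
by rewrite (bigD1 k) //= lerDl sumr_ge0.
Qed.

Section EuclideanDistance.
Variables (R : realType) (n : nat).
Implicit Types t s : n.-tuple R.

Lemma eucl_dist_ge0 t s : 0 <= eucl_dist t s.
Proof. exact: sqrtr_ge0. Qed.

Lemma eucl_distxx t : eucl_dist t t = 0.
Proof. by rewrite /eucl_dist big1 ?sqrtr0 // => k _; rewrite subrr expr0n. Qed.

Lemma eucl_distC t s : eucl_dist t s = eucl_dist s t.
Proof.
by rewrite /eucl_dist; congr Num.sqrt; apply: eq_bigr => k _; rewrite -sqrrN opprB.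
Qed.

Lemma ler_tnth_dist t s k : `|tnth t k - tnth s k| <= eucl_dist t s.
Proof.
rewrite /eucl_dist -sqrtr_sqr; apply: ler_wsqrtr.
by rewrite (bigD1 k) //= lerDl; apply: sumr_ge0 => i _; exact: sqr_ge0.
Qed.

Lemma ler_coord_dist t s k : `|Defs.coord t k - Defs.coord s k| <= eucl_dist t s.
Proof.
rewrite /Defs.coord; case: (ltnP k n) => hk.
  by have := ler_tnth_dist t s (Ordinal hk); rewrite !(tnth_nth 0).
by rewrite !nth_default ?size_tuple // subrr normr0 eucl_dist_ge0.
Qed.

Lemma eucl_dist_eq0 t s : eucl_dist t s = 0 -> t = s.
Proof.
move=> ts0; apply: eq_from_tnth => k; apply/eqP; rewrite -subr_eq0 -normr_eq0.
by rewrite eq_le normr_ge0 andbT -ts0 ler_tnth_dist.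
Qed.

Lemma eucl_dist_le_l1 t s : eucl_dist t s <= \sum_(k < n) `|tnth t k - tnth s k|.
Proof. exact: sqrt_sum_sqr_le_l1. Qed.

Lemma eucl_norm_le_dist t s :
  eucl_norm t <= \sum_(k < n) `|tnth s k| + n%:R * eucl_dist t s.
Proof.
apply: (le_trans (sqrt_sum_sqr_le_l1 _)).
rewrite mulr_natl -[n in _ *+ n]card_ord -sumr_const -big_split /=.
apply: ler_sum => k _.
have : `|tnth t k| <= `|tnth s k| + `|tnth t k - tnth s k|.
  by rewrite -[X in `|X| <= _](subrK (tnth s k)) addrC ler_normD.
by move/le_trans; apply; rewrite lerD2l ler_tnth_dist.
Qed.

End EuclideanDistance.

Section CubeCompactness.
Variables (R : realType) (d : nat) (a b : R).
Hypothesis d_gt0 : (0 < d)%N.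

Lemma cube_finite_cover (e : d.-tuple R -> R) :
  (forall x, cube a b x -> 0 < e x) ->
  exists s : seq (d.-tuple R), (forall y, y \in s -> cube a b y) /\
    forall x, cube a b x -> exists2 y, y \in s & eucl_dist x y < e y.
Proof.
move=> e_gt0.
pose t2r (x : d.-tuple R) : 'rV[R]_d := \row_i tnth x i.
pose r2t (v : 'rV[R]_d) : d.-tuple R := [tuple v ord0 i | i < d].
pose C := [set v : 'rV[R]_d | forall i, `[a, b]%classic (v ord0 i)].
have cptC : compact C.
  by apply: (@rV_compact R d (fun _ => `[a, b]%classic)) => _; exact: segment_compact.
have dR_gt0 : 0 < d%:R :> R by rewrite ltr0n.
(* sup-norm balls of radius e/(2d) lie in Euclidean balls of radius e/2 *)
pose rad y := e y / (2 * d%:R).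
rewrite compact_cover in cptC.
have [|v Cv|D' sD' covC] := cptC _ (cube a b) (fun y => ball (t2r y) (rad y)).
- by move=> i _; exact: ball_open.
- have cv : cube a b (r2t v).
    by move=> j; rewrite tnth_mktuple; have := Cv j; rewrite /= in_itv.
  exists (r2t v) => //.
  have -> : t2r (r2t v) = v by apply/rowP => i; rewrite !mxE tnth_mktuple ord1.
  by apply: ballxx; rewrite /rad divr_gt0 ?e_gt0 // mulr_gt0.
exists (finmap.enum_fset D'); split.
  by move=> y yD; have /sD' /set_mem : y \in D' by [].
move=> x cx.
have [|y /= yD xy] := covC (t2r x).
  by move=> i; rewrite /= mxE in_itv /=; exact: cx.
exists y => //.
have ey : 0 < e y by apply: e_gt0; exact: (set_mem (sD' _ yD)).
have xy_i i : `|tnth x i - tnth y i| < rad y.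
  move: xy; rewrite -ball_normE /ball_ /=; apply: le_lt_trans.
  have -> : tnth x i - tnth y i = - ((t2r y - t2r x) ord0 i) by rewrite !mxE opprB.
  rewrite normrN [X in _ <= X]/Num.norm /= mx_normrE.
  by apply/bigmax_geP; right; exists (ord0, i).
apply: (le_lt_trans (eucl_dist_le_l1 x y)).
apply: (@le_lt_trans _ _ (\sum_(k < d) rad y)); first by apply: ler_sum => k _; exact: ltW.
rewrite sumr_const card_ord -[rad y *+ d]mulr_natr /rad.
have -> : e y / (2 * d%:R) * d%:R = e y / 2 by field; rewrite pnatr_eq0 -lt0n.
lra.
Qed.

Lemma locally_bounded_cube_unif (n : nat) (phi : n.-tuple R * d.-tuple R -> R)
    (th : n.-tuple R) :
  (forall x, cube a b x -> exists eps : R, 0 < eps /\ exists M : R,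
     forall th' x', cube a b x' -> eucl_dist th' th < eps -> eucl_dist x' x < eps ->
       `|phi (th', x')| <= M) ->
  exists eps : R, 0 < eps /\ exists M : R,
     forall th' x', cube a b x' -> eucl_dist th' th < eps -> `|phi (th', x')| <= M.
Proof.
move=> phi_loc.
have : forall x, exists em : R * R, cube a b x -> 0 < em.1 /\
     forall th' x', cube a b x' -> eucl_dist th' th < em.1 -> eucl_dist x' x < em.1 ->
       `|phi (th', x')| <= em.2.
  move=> x; have [cx|ncx] := pselect (cube a b x); last by exists (0, 0).
  by have [eps [eps_gt0 [M hM]]] := phi_loc x cx; exists (eps, M).
case/choice => em hem.
have [s [s_cube s_cov]] := cube_finite_cover (fun x cx => (hem x cx).1).
exists (\big[Num.min/1]_(y <- s) (em y).1); split.
  rewrite big_seq; apply: (big_ind (fun m : R => 0 < m)) => //.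
    by move=> u v u0 v0; rewrite lt_min u0.
  by move=> y ys; exact: (hem y (s_cube y ys)).1.
exists (\big[Num.max/0]_(y <- s) (em y).2) => th' x' cx' th'_near.
have [y ys x'y] := s_cov x' cx'.
apply: (le_trans ((hem y (s_cube y ys)).2 th' x' cx' _ x'y)).
  by apply: (lt_le_trans th'_near); exact: (ge_bigmin_seq _ y).
exact: (le_bigmax_seq _ y).
Qed.

End CubeCompactness.

Section BoxMeasurability.
Variables (R : realType) (d : nat).

Lemma box_measurable (l u : d.-tuple R) : measurable (box l u).
Proof.
have -> : box l u = \bigcap_(j in [set: 'I_d])
    ((fun x : d.-tuple R => tnth x j) @^-1` `[tnth l j, tnth u j]%classic).
  apply/seteqP; split => x /= lxu j; first by move=> _; rewrite /= in_itv /= lxu.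
  by have := lxu j I; rewrite /= in_itv.
apply: fin_bigcap_measurable => // j _; rewrite -[X in measurable X]setTI.
by apply: measurable_tnth => //; exact: measurable_itv.
Qed.

Lemma cube_box (a b : R) :
  cube a b = box [tuple a | _ < d] [tuple b | _ < d].
Proof.
by apply/seteqP; split => x /= abx j; rewrite ?tnth_mktuple; have := abx j;
  rewrite ?tnth_mktuple.
Qed.

Lemma cube_measurable (a b : R) : measurable (cube a b : set (d.-tuple R)).
Proof. by rewrite cube_box; exact: box_measurable. Qed.

Lemma affine_measurable (c : R) (w : 'I_d -> R) :
  measurable_fun setT (fun x : d.-tuple R => c + \sum_(j < d) w j * tnth x j).
Proof.
apply: measurable_funD => //; apply: measurable_sum => j.
by apply: measurable_funM => //; exact: measurable_tnth.
Qed.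

End BoxMeasurability.

Lemma measurable_fun_pairE d1 d2 d3 (T1 : measurableType d1) (T2 : measurableType d2)
    (T3 : measurableType d3) (E : set T2) (f : T1 * T2 -> T3) (t : T1) :
  measurable E -> measurable_fun (setT `*` E) f -> measurable_fun E (fun x => f (t, x)).
Proof.
move=> mE mf; apply: (measurable_comp (F := setT `*` E)) => //.
- exact: measurableX.
- by move=> _ [x Ex <-].
- exact: measurable_funS (pair1_measurable t).
Qed.

Section BoundedIntegrals.
Context dT (T : measurableType dT) (R : realType) (mu : {measure set T -> \bar R}).
Implicit Types (D E : set T) (f : T -> R).

Lemma bounded_integrable D f (K : R) :
  measurable D -> (mu D < +oo)%E -> measurable_fun D f ->
  (forall x, D x -> `|f x| <= K) -> mu.-integrable D (EFin \o f).
Proof.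
move=> mD Dfin mf fK; apply: measurable_bounded_integrable => //.
exists K; split; first exact: num_real.
by move=> M KM x Dx; apply: le_trans (fK x Dx) (ltW KM).
Qed.

Lemma norm_Rintegral_le D f (K : R) :
  measurable D -> (mu D < +oo)%E -> measurable_fun D f ->
  (forall x, D x -> `|f x| <= K) -> `|\int[mu]_(x in D) f x| <= K * fine (mu D).
Proof.
move=> mD Dfin mf fK; have intf := bounded_integrable mD Dfin mf fK.
apply: (le_trans (le_normr_Rintegral mD intf)); rewrite -Rintegral_cst //.
apply: le_Rintegral => //; first exact: integrable_norm.
by apply: (bounded_integrable (K := `|K|)) => // x _; rewrite normr_id.
Qed.

Lemma Rintegral_setID D E f : measurable D -> measurable E ->
  mu.-integrable D (EFin \o f) ->
  \int[mu]_(x in D) f x = \int[mu]_(x in D `&` E) f x + \int[mu]_(x in D `\` E) f x.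
Proof.
move=> mD mE intf; rewrite -Rintegral_setU ?setUIDK //.
- exact: measurableI.
- exact: measurableD.
- by apply/disj_setPS => x [[_ ?] [_ ?]].
Qed.

Lemma measure_sub_finsum (I : finType) (A : set T) (F : I -> set T) :
  (forall i, measurable (F i)) -> measurable A -> A `<=` \bigcup_i F i ->
  (mu A <= \sum_(i : I) mu (F i))%E.
Proof.
move=> mF mA AF; apply: (le_trans (content_sub_fsum _ finite_finset _ mA AF)) => //.
rewrite (fsbigE (enum I)) ?enum_uniq //; last by move=> i _; rewrite mem_enum.
by under eq_bigl do rewrite in_setT; rewrite big_enum.
Qed.

Lemma Rintegral_domainB (S1 S2 : set T) (f1 f2 : T -> R) :
  measurable S1 -> measurable S2 -> mu.-integrable S1 (EFin \o f1) ->
  mu.-integrable S1 (EFin \o f2) -> mu.-integrable S2 (EFin \o f2) ->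
  \int[mu]_(x in S1) f1 x - \int[mu]_(x in S2) f2 x =
  \int[mu]_(x in S1) (f1 x - f2 x) +
    (\int[mu]_(x in S1 `\` S2) f2 x - \int[mu]_(x in S2 `\` S1) f2 x).
Proof.
move=> mS1 mS2 int11 int12 int22.
rewrite RintegralB // (Rintegral_setID mS1 mS2 int12) (Rintegral_setID mS2 mS1 int22).
by rewrite setIC; ring.
Qed.

End BoundedIntegrals.

Section ParametricIntegral.
Context dT (T : measurableType dT) (R : realType) (mu : {measure set T -> \bar R}).
Variables (n : nat) (E : set T) (g : n.-tuple R -> T -> R).

Definition locally_unif_lipschitz_bounded :=
  forall th, exists eps : R, 0 < eps /\ exists K1 K2 : R,
    forall th1 th2 x, E x -> eucl_dist th1 th < eps -> eucl_dist th2 th < eps ->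
      `|g th1 x - g th2 x| <= K1 * eucl_dist th1 th2 /\ `|g th1 x| <= K2.

Hypotheses (mE : measurable E) (E_fin : (mu E < +oo)%E).

Lemma measure_subset_lty (A : set T) : measurable A -> A `<=` E -> (mu A < +oo)%E.
Proof. by move=> mA AE; apply: le_lt_trans E_fin; apply: le_measure => //; exact/mem_set. Qed.

Lemma fine_measure_subset_le (A : set T) : measurable A -> A `<=` E ->
  fine (mu A) <= fine (mu E).
Proof.
move=> mA AE; rewrite fine_le ?ge0_fin_numE ?(measure_subset_lty mA AE) //.
by apply: le_measure => //; exact/mem_set.
Qed.

Section BoundedIntegrand.
Variables (f : T -> R) (K : R).
Hypotheses (mf : measurable_fun E f) (fK : forall x, E x -> `|f x| <= K).

Lemma integrable_subset (A : set T) : measurable A -> A `<=` E ->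
  mu.-integrable A (EFin \o f).
Proof.
move=> mA AE; apply: (bounded_integrable (K := K)) => //.
- exact: measure_subset_lty.
- exact: measurable_funS mf.
- by move=> x /AE /fK.
Qed.

Lemma norm_Rintegral_subset_le (A : set T) : measurable A -> A `<=` E ->
  `|\int[mu]_(x in A) f x| <= `|K| * fine (mu A).
Proof.
move=> mA AE; apply: norm_Rintegral_le => //.
- exact: measure_subset_lty.
- exact: measurable_funS mf.
- by move=> x /AE /fK /le_trans; apply; exact: ler_norm.
Qed.

Lemma norm_Rintegral_measure_le (A : set T) (r : R) : measurable A -> A `<=` E ->
  (mu A <= r%:E)%E -> `|\int[mu]_(x in A) f x| <= `|K| * r.
Proof.
move=> mA AE muAr; apply: (le_trans (norm_Rintegral_subset_le mA AE)).
rewrite ler_wpM2l // -lee_fin fineK // ge0_fin_numE //; exact: measure_subset_lty.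
Qed.

End BoundedIntegrand.

Hypotheses (mg : forall th, measurable_fun E (g th)) (gL : locally_unif_lipschitz_bounded).

Lemma locally_lipschitz_Rintegral (U : set (n.-tuple R)) (S : n.-tuple R -> set T) :
  (forall th, measurable (S th)) -> (forall th, S th `<=` E) ->
  (forall th, U th -> exists eps : R, 0 < eps /\ exists C : R, forall th1 th2,
     eucl_dist th1 th < eps -> eucl_dist th2 th < eps ->
     (mu (S th1 `\` S th2) <= (C * eucl_dist th1 th2)%:E)%E) ->
  locally_lipschitz_on U (fun th => \int[mu]_(x in S th) g th x).
Proof.
move=> mS SE S_lip th Uth.
have [eps1 [eps1_gt0 [K1 [K2 gK]]]] := gL th.
have [eps2 [eps2_gt0 [C SC]]] := S_lip th Uth.
exists (Num.min eps1 eps2); split; first by rewrite lt_min eps1_gt0.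
exists (`|K1| * fine (mu E) + 2 * (`|K2| * C)) => th1 th2 _ _.
rewrite !lt_min => /andP[th1_near th1_near'] /andP[th2_near th2_near'].
have g1K x : E x -> `|g th1 x| <= K2 by move=> Ex; exact: (gK _ _ x Ex th1_near th1_near).2.
have g2K x : E x -> `|g th2 x| <= K2 by move=> Ex; exact: (gK _ _ x Ex th2_near th2_near).2.
have g12 x : E x -> `|g th1 x - g th2 x| <= K1 * eucl_dist th1 th2.
  by move=> Ex; exact: (gK _ _ x Ex th1_near th2_near).1.
rewrite Rintegral_domainB ?(integrable_subset (mg _) g1K) ?(integrable_subset (mg _) g2K) //.
have I0_le : `|\int[mu]_(x in S th1) (g th1 x - g th2 x)|
    <= `|K1| * fine (mu E) * eucl_dist th1 th2.
  apply: (le_trans (norm_Rintegral_subset_le (measurable_funB (mg _) (mg _)) g12 (mS _) (SE _))).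
  rewrite normrM (ger0_norm (eucl_dist_ge0 _ _)) mulrAC ler_wpM2r ?eucl_dist_ge0 //.
  by rewrite ler_wpM2l // fine_measure_subset_le.
have setD_le t1 t2 : eucl_dist t1 th < eps2 -> eucl_dist t2 th < eps2 ->
    `|\int[mu]_(x in S t1 `\` S t2) g th2 x| <= `|K2| * (C * eucl_dist t1 t2).
  move=> t1_near t2_near; apply: (norm_Rintegral_measure_le (mg _) g2K) => //.
  - exact: measurableD.
  - by move=> x [/SE].
  - exact: SC.
have := setD_le th1 th2 th1_near' th2_near'.
have := setD_le th2 th1 th2_near' th1_near'; rewrite eucl_distC.
move: I0_le; set I0 := \int[mu]_(x in S th1) _; set Dt := eucl_dist th1 th2.
set I1 := \int[mu]_(x in S th1 `\` S th2) _; set I2 := \int[mu]_(x in S th2 `\` S th1) _.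
move=> I0_le I2_le I1_le; have := ler_normB I1 I2; have := ler_normD I0 (I1 - I2).
lra.
Qed.

End ParametricIntegral.

Lemma grid_cell (R : realType) (N : nat) (o h u : R) : 0 < h ->
  o <= u <= o + N.+1%:R * h ->
  exists k : 'I_N.+1, o + k%:R * h <= u <= o + k%:R * h + h.
Proof.
move=> h_gt0 /andP[ou uo]; set t := (u - o) / h.
have t_ge0 : 0 <= t by rewrite divr_ge0 ?subr_ge0 // ltW.
have t_le : t <= N.+1%:R by rewrite ler_pdivrMr // lerBlDl.
suff [k /andP[kt tk]] : exists k : 'I_N.+1, k%:R <= t <= k%:R + 1.
  exists k; move: kt tk; rewrite ler_pdivlMr // ler_pdivrMr // mulrDl mul1r.
  by move=> kt tk; apply/andP; split; lra.
have /andP[trunc_le trunc_gt] := truncn_itv t_ge0.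
have [tr_le|tr_gt] := leqP (Num.truncn t) N.
  have tr_lt : (Num.truncn t < N.+1)%N by rewrite ltnS.
  by exists (Ordinal tr_lt); rewrite /= trunc_le natr1 ltW.
exists ord_max; rewrite /= natr1 t_le andbT.
by apply: le_trans trunc_le; rewrite ler_nat ltnW.
Qed.

Section Slab.
Variables (R : realType) (d : nat) (a b : R) (mu : {measure set (d.-tuple R) -> \bar R}).
Hypotheses (ab : a < b) (mu_leb : is_lebesgue mu) (d_gt0 : (0 < d)%N).
Variables (w : 'I_d -> R) (c : R) (j : 'I_d).
Hypothesis wj_neq0 : w j != 0.

Let affine (x : d.-tuple R) := c + \sum_(k < d) w k * tnth x k.
Let step N := (b - a) / N.+1%:R.
Let width N r (k : 'I_d) := if k == j then 2 * r / N.+1%:R else step N.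
(* solving [affine x = 0] for [x_j] at the lower corner of a cell in the other coordinates *)
Let center N (s : {ffun 'I_d -> 'I_N.+1}) :=
  - (c + \sum_(k < d | k != j) w k * (a + (s k)%:R * step N)) / w j.
Let origin N r (s : {ffun 'I_d -> 'I_N.+1}) (k : 'I_d) :=
  if k == j then center s - r else a.
Let cell_lo N r (s : {ffun 'I_d -> 'I_N.+1}) :=
  [tuple origin r s k + (s k)%:R * width N r k | k < d].
Let cell_up N r (s : {ffun 'I_d -> 'I_N.+1}) :=
  [tuple origin r s k + (s k)%:R * width N r k + width N r k | k < d].

Let step_gt0 N : 0 < step N.
Proof. by rewrite divr_gt0 ?subr_gt0 ?ltr0n. Qed.

Lemma measure_cell N r (s : {ffun 'I_d -> 'I_N.+1}) : 0 < r ->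
  mu (box (cell_lo r s) (cell_up r s)) = (2 * r / N.+1%:R * step N ^+ d.-1)%:E.
Proof.
move=> r_gt0; have width_gt0 k : 0 < width N r k.
  by rewrite /width; case: ifP => _; rewrite ?step_gt0 // divr_gt0 ?mulr_gt0 ?ltr0n.
rewrite mu_leb => [|k]; last by rewrite !tnth_mktuple lerDl ltW.
congr EFin; rewrite (bigD1 j) //= !tnth_mktuple addrAC subrr add0r /width eqxx.
rewrite (eq_bigr (fun _ => step N)) => [|k /negbTE kj]; last first.
  by rewrite !tnth_mktuple /width kj addrAC subrr add0r.
by rewrite prodr_const cardC1 card_ord.
Qed.

Lemma center_near N eta (s : {ffun 'I_d -> 'I_N.+1}) (x : d.-tuple R) :
  (\sum_(k < d) `|w k|) * step N <= eta -> `|affine x| <= eta ->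
  (forall k, k != j -> a + (s k)%:R * step N <= tnth x k <= a + (s k)%:R * step N + step N) ->
  `|tnth x j - center s| <= 2 * eta / `|w j|.
Proof.
move=> S_step affine_le x_cell.
pose l k := a + (s k)%:R * step N.
have -> : tnth x j - center s =
    (affine x - \sum_(k < d | k != j) w k * (tnth x k - l k)) / w j.
  have -> : \sum_(k < d | k != j) w k * (tnth x k - l k) =
      \sum_(k < d | k != j) w k * tnth x k - \sum_(k < d | k != j) w k * l k.
    by rewrite -sumrB; apply: eq_bigr => k _; rewrite mulrBr.
  by rewrite /affine (bigD1 j) //= /center /l; field.
have rest_le : `|\sum_(k < d | k != j) w k * (tnth x k - l k)| <= eta.
  apply: (le_trans (ler_norm_sum _ _ _)); apply: le_trans S_step.
  rewrite mulr_suml [X in _ <= X](bigD1 j) //= -[X in X <= _]add0r.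
  apply: lerD; first exact: mulr_ge0 (normr_ge0 _) (ltW (step_gt0 N)).
  apply: ler_sum => k kj; rewrite normrM ler_wpM2l //.
  by have /andP[lx xl] := x_cell k kj; rewrite ger0_norm ?subr_ge0 // lerBlDl.
rewrite normrM normfV ler_pdivrMr ?normr_gt0 // divfK ?normr_eq0 // mulr2n mulrDl mul1r.
by apply: (le_trans (ler_normB _ _)); exact: lerD.
Qed.

Lemma slab_sub_cells N eta : 0 < eta ->
  (\sum_(k < d) `|w k|) * step N <= eta ->
  [set x | cube a b x /\ `|affine x| <= eta] `<=`
    \bigcup_(s : {ffun 'I_d -> 'I_N.+1}) box (cell_lo (2 * eta / `|w j|) s)
                                                (cell_up (2 * eta / `|w j|) s).
Proof.
move=> eta_gt0 S_step x [cx affine_le]; set r := 2 * eta / `|w j|.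
have step_N : a + N.+1%:R * step N = b.
  by rewrite /step mulrC divfK ?pnatr_eq0 // subrKC.
have /fin_all_exists [s1 s1_cell] : forall k, exists i : 'I_N.+1,
    a + i%:R * step N <= tnth x k <= a + i%:R * step N + step N.
  by move=> k; apply: grid_cell; rewrite ?step_gt0 // step_N cx.
set s := [ffun k => s1 k].
have x_cell k : k != j ->
    a + (s k)%:R * step N <= tnth x k <= a + (s k)%:R * step N + step N.
  by rewrite ffunE.
have := center_near S_step affine_le x_cell; rewrite -/r ler_norml => /andP[xj_ge xj_le].
have rho_gt0 : 0 < 2 * r / N.+1%:R.
  by rewrite /r divr_gt0 ?ltr0n // mulr_gt0 // divr_gt0 ?mulr_gt0 // normr_gt0.
have [|ij ij_cell] := grid_cell (N := N) (o := center s - r) (u := tnth x j) rho_gt0.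
  by rewrite mulrC divfK ?pnatr_eq0 //; apply/andP; split; lra.
pose s2 := [ffun k => if k == j then ij else s k].
have center_s2 : center s2 = center s.
  by rewrite /center; congr (- (c + _) / _); apply: eq_bigr => k /negbTE kj; rewrite ffunE kj.
exists s2 => // k; rewrite !tnth_mktuple /origin /width ffunE.
by case: eqVneq => [->|kj]; [rewrite center_s2 | exact: x_cell].
Qed.

Lemma measure_slab_le (X : set (d.-tuple R)) eta : 0 < eta -> measurable X ->
  X `<=` [set x | cube a b x /\ `|c + \sum_(k < d) w k * tnth x k| <= eta] ->
  (mu X <= (4 * eta * (b - a) ^+ d.-1 / `|w j|)%:E)%E.
Proof.
move=> eta_gt0 mX X_slab; set S := \sum_(k < d) `|w k|.
pose N := Num.truncn (S * (b - a) / eta).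
have S_step : S * step N <= eta.
  have := truncnS_gt (S * (b - a) / eta); rewrite -/N => N_gt.
  rewrite /step mulrA ler_pdivrMr ?ltr0n // mulrC ltW //.
  by move: N_gt; rewrite ltr_pdivrMr // [eta * _]mulrC mulrC.
set r := 2 * eta / `|w j|.
have r_gt0 : 0 < r by rewrite divr_gt0 ?mulr_gt0 ?normr_gt0.
apply: (le_trans (measure_sub_finsum (F := fun s => box (cell_lo r s) (cell_up r s)) _ _ mX _)).
- by move=> s; exact: box_measurable.
- exact: subset_trans X_slab (slab_sub_cells eta_gt0 S_step).
under eq_bigr do rewrite measure_cell //.
rewrite sumEFin lee_fin sumr_const card_ffun !card_ord -(mulr_natr _ (N.+1 ^ d)) natrX.
rewrite -[in X in _ * X](prednK d_gt0) exprS le_eqVlt; apply/orP; left; apply/eqP.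
rewrite /step /r expr_div_n; field.
by rewrite normr_eq0 wj_neq0 expf_neq0 ?pnatr_eq0 // addrC natr1 pnatr_eq0.
Qed.

End Slab.

Definition preact (R : realType) (d H : nat) (th : (npar d H).-tuple R) (i : 'I_H)
    (x : d.-tuple R) : R :=
  bias th i + \sum_(j < d) wgt th i j * tnth x j.

Section ActiveRegion.
Variables (R : realType) (d H : nat) (a b : R) (i : 'I_H).
Implicit Types th : (npar d H).-tuple R.

Lemma Iset_measurable th : measurable (Iset a b th i).
Proof.
have -> : Iset a b th i = cube a b `&` (preact th i @^-1` `]0, +oo[%classic).
  by apply/seteqP; split => x [cx px]; split; rewrite //= in_itv /= andbT in px *.
apply: measurableI; first exact: cube_measurable.
by rewrite -[X in measurable X]setTI; apply: affine_measurable => //; exact: measurable_itv.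
Qed.

Lemma Iset_sub_cube th : Iset a b th i `<=` cube a b.
Proof. by move=> x []. Qed.

Lemma preact_lipschitz th1 th2 x : cube a b x ->
  `|preact th1 i x - preact th2 i x| <= (1 + d%:R * (`|a| + `|b|)) * eucl_dist th1 th2.
Proof.
move=> cx; have x_le j : `|tnth x j| <= `|a| + `|b|.
  have /andP[ax xb] := cx j; have := ler_norm (- a); have := ler_norm b.
  have := normr_ge0 a; have := normr_ge0 b.
  by rewrite normrN ler_norml => *; apply/andP; split; lra.
rewrite /preact opprD addrACA -sumrB mulrDl mul1r.
apply: (le_trans (ler_normD _ _)); apply: lerD; first exact: ler_coord_dist.
apply: (le_trans (ler_norm_sum _ _ _)); rewrite -mulrA mulr_natl.
rewrite -[d in _ *+ d]card_ord -sumr_const; apply: ler_sum => j _.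
rewrite -mulrBl normrM mulrC ler_pM ?normr_ge0 //; exact: ler_coord_dist.
Qed.

Lemma Iset_setD_sub th1 th2 : Iset a b th1 i `\` Iset a b th2 i `<=`
  [set x | cube a b x /\
    `|preact th1 i x| <= (1 + d%:R * (`|a| + `|b|)) * eucl_dist th1 th2].
Proof.
move=> x [[cx px1] /not_andP[//|/negP]]; rewrite -leNgt => px2; split => //.
apply: le_trans (preact_lipschitz th1 th2 cx); rewrite gtr0_norm //.
by apply: le_trans (ler_norm _); rewrite lerDl oppr_ge0.
Qed.

End ActiveRegion.

Section ActiveRegionMeasure.
Variables (R : realType) (d H : nat) (a b : R) (mu : {measure set (d.-tuple R) -> \bar R}).
Hypotheses (ab : a < b) (mu_leb : is_lebesgue mu) (d_gt0 : (0 < d)%N).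
Variable i : 'I_H.
Implicit Types th : (npar d H).-tuple R.

Let B := 1 + d%:R * (`|a| + `|b|).

Let B_gt0 : 0 < B.
Proof. by rewrite ltr_pwDl // mulr_ge0 ?addr_ge0. Qed.

Lemma Iset_setD_le_of_weight th (j : 'I_d) : wgt th i j != 0 ->
  exists eps : R, 0 < eps /\ exists C : R, forall th1 th2,
    eucl_dist th1 th < eps -> eucl_dist th2 th < eps ->
    (mu (Iset a b th1 i `\` Iset a b th2 i) <= (C * eucl_dist th1 th2)%:E)%E.
Proof.
move=> wj_neq0; set w0 := `|wgt th i j|.
have w0_gt0 : 0 < w0 by rewrite normr_gt0.
exists (w0 / 2); split; first by rewrite divr_gt0.
exists (4 * B * (b - a) ^+ d.-1 / (w0 / 2)) => th1 th2 th1_near _.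
have w1_ge : w0 / 2 <= `|wgt th1 i j|.
  have := ler_coord_dist th1 th (i * d + j).
  rewrite -/(wgt th1 i j) -/(wgt th i j) distrC.
  have := lerB_dist (wgt th i j) (wgt th1 i j); rewrite -/w0; lra.
have [D0|D_neq0] := eqVneq (eucl_dist th1 th2) 0.
  by rewrite D0 mulr0 (eucl_dist_eq0 D0) setDv measure0.
have D_gt0 : 0 < eucl_dist th1 th2 by rewrite lt0r D_neq0 eucl_dist_ge0.
have w1_gt0 : 0 < `|wgt th1 i j| by apply: lt_le_trans w1_ge; rewrite divr_gt0.
have mI := measurableD (Iset_measurable a b i th1) (Iset_measurable a b i th2).
have w1_neq0 : wgt th1 i j != 0 by rewrite -normr_gt0.
have := measure_slab_le ab mu_leb d_gt0 w1_neq0 (mulr_gt0 B_gt0 D_gt0) mI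
  (Iset_setD_sub (th1 := th1) (th2 := th2)).
move/le_trans; apply.
set Q := 4 * B * (b - a) ^+ d.-1 * eucl_dist th1 th2.
have Q_ge0 : 0 <= Q by rewrite !mulr_ge0 ?exprn_ge0 ?subr_ge0 ?eucl_dist_ge0 ?ltW.
rewrite lee_fin (_ : _ / `|_| = Q / `|wgt th1 i j|); last by rewrite /Q; ring.
rewrite (_ : _ * eucl_dist th1 th2 = Q / (w0 / 2)); last by rewrite /Q; ring.
by rewrite ler_wpM2l // lef_pV2 ?posrE ?divr_gt0.
Qed.

Lemma Iset_setD_eq0_of_bias th : (forall j, wgt th i j = 0) -> bias th i != 0 ->
  exists eps : R, 0 < eps /\ forall th1 th2,
    eucl_dist th1 th < eps -> eucl_dist th2 th < eps ->
    Iset a b th1 i `\` Iset a b th2 i = set0.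
Proof.
move=> w0 b_neq0; set b0 := `|bias th i|.
have b0_gt0 : 0 < b0 by rewrite normr_gt0.
exists (b0 / (2 * B)); split; first by rewrite divr_gt0 ?mulr_gt0.
(* [preact th i] is the constant [bias th i]; nearby preactivations keep its sign *)
have near_bias t x : cube a b x -> eucl_dist t th < b0 / (2 * B) ->
    `|preact t i x - bias th i| < b0 / 2.
  move=> cx t_near; have := preact_lipschitz i t th cx.
  have -> : preact th i x = bias th i.
    by rewrite /preact big1 ?addr0 // => k _; rewrite w0 mul0r.
  move/le_lt_trans; apply; rewrite -/B mulrC -ltr_pdivlMr //.
  by rewrite -mulrA -invfM.
move=> th1 th2 th1_near th2_near; apply/seteqP; split => // x [[cx p1] p2]; apply: p2.
split => //; move: p1; rewrite -/(preact th1 i x) -/(preact th2 i x) => p1.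
have := near_bias th1 x cx th1_near; have := near_bias th2 x cx th2_near.
rewrite /b0; case: (ltrgt0P (bias th i)) => [bi|bi|bi]; last by rewrite bi eqxx in b_neq0.
all: by rewrite !ltr_norml => /andP[? ?] /andP[? ?]; lra.
Qed.

Lemma Iset_setD_lipschitz th : ~ degenerate th i ->
  exists eps : R, 0 < eps /\ exists C : R, forall th1 th2,
    eucl_dist th1 th < eps -> eucl_dist th2 th < eps ->
    (mu (Iset a b th1 i `\` Iset a b th2 i) <= (C * eucl_dist th1 th2)%:E)%E.
Proof.
move=> ndeg; have [[j wj]|w_eq0] := pselect (exists j, wgt th i j != 0).
  exact: Iset_setD_le_of_weight wj.
have {}w_eq0 j : wgt th i j = 0 by apply/eqP; apply: contra_notT w_eq0 => wj; exists j.
have [|eps [eps_gt0 Iset_eq]] := Iset_setD_eq0_of_bias w_eq0.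
  apply/eqP => b_eq0; apply: ndeg; rewrite /degenerate b_eq0 normr0 add0r.
  by rewrite big1 // => k _; rewrite w_eq0 normr0.
exists eps; split => //; exists 0 => th1 th2 th1_near th2_near.
by rewrite Iset_eq // measure0 mul0r.
Qed.

End ActiveRegionMeasure.

Section NetworkIntegrand.
Variables (R : realType) (d n : nat) (a b : R).
Variables (phi : n.-tuple R * d.-tuple R -> R) (p : d.-tuple R -> R).
Hypothesis d_gt0 : (0 < d)%N.

Lemma locally_unif_lipschitz_bounded_mul :
  (exists M : R, forall x, cube a b x -> `|p x| <= M) ->
  (forall th x, cube a b x -> exists eps : R, 0 < eps /\ exists M : R,
     forall th' x', cube a b x' -> eucl_dist th' th < eps -> eucl_dist x' x < eps ->
       `|phi (th', x')| <= M) ->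
  (forall r : R, 0 < r -> exists L : R,
     forall th vth, eucl_norm th + eucl_norm vth <= r -> th <> vth ->
       forall x, cube a b x ->
         `|phi (th, x) - phi (vth, x)| <= L * eucl_dist th vth) ->
  locally_unif_lipschitz_bounded (cube a b) (fun th x => phi (th, x) * p x).
Proof.
move=> [Mp pM] phi_loc phi_lip th.
have [eps [eps_gt0 [M phiM]]] := locally_bounded_cube_unif d_gt0 (phi_loc th).
set l1 := \sum_(k < n) `|tnth th k|.
have norm_le t : eucl_dist t th < 1 -> eucl_norm t <= l1 + n%:R.
  move=> t_near; apply: (le_trans (eucl_norm_le_dist t th)).
  by rewrite lerD2l ler_piMr // ltW.
have l1_ge0 : 0 <= l1 by apply: sumr_ge0.
have r_gt0 : 0 < 2 * (l1 + n%:R) + 1 by rewrite ltr_pwDr // mulr_ge0 // addr_ge0.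
have [L phiL] := phi_lip _ r_gt0.
exists (Num.min eps 1); split; first by rewrite lt_min eps_gt0 ltr01.
exists (L * Mp), (M * Mp) => th1 th2 x cx.
rewrite !lt_min => /andP[th1_near th1_1] /andP[th2_near th2_1].
split; last by rewrite normrM ler_pM ?normr_ge0 ?phiM ?pM.
rewrite -mulrBl normrM mulrAC ler_pM ?normr_ge0 ?pM //.
have [<-|th12] := eqVneq th1 th2; first by rewrite subrr normr0 eucl_distxx mulr0.
apply: phiL => //; last exact/eqP.
by have := norm_le _ th1_1; have := norm_le _ th2_1; lra.
Qed.

End NetworkIntegrand.

Theorem corollary2p6 (R : realType) (d H : nat) (a b : R)
    (mu : {measure set (d.-tuple R) -> \bar R})
    (p : d.-tuple R -> R)
    (phi : (npar d H).-tuple R * d.-tuple R -> R) :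
  (0 < d)%N -> (0 < H)%N -> a < b ->
  is_lebesgue mu ->
  measurable_fun (cube a b) p ->
  (forall x, cube a b x -> 0 <= p x) ->
  (exists M : R, forall x, cube a b x -> `|p x| <= M) ->
  measurable_fun (setT `*` cube a b) phi ->
  (forall th x, cube a b x -> exists eps : R, 0 < eps /\ exists M : R,
     forall th' x', cube a b x' -> eucl_dist th' th < eps -> eucl_dist x' x < eps ->
       `|phi (th', x')| <= M) ->
  (forall r : R, 0 < r -> exists L : R,
     forall th vth, eucl_norm th + eucl_norm vth <= r -> th <> vth ->
       forall x, cube a b x ->
         `|phi (th, x) - phi (vth, x)| <= L * eucl_dist th vth) ->
  locally_lipschitz_on setT
    (fun th => Rintegral mu (cube a b) (fun x => phi (th, x) * p x)) /\
  (forall i : 'I_H,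
     locally_lipschitz_on [set th | ~ degenerate th i]
       (fun th => Rintegral mu (Iset a b th i) (fun x => phi (th, x) * p x))).
Proof.
move=> d_gt0 _ ab mu_leb mp _ p_bd mphi phi_loc phi_lip.
have mC : measurable (cube a b : set (d.-tuple R)) := cube_measurable a b.
have C_fin : (mu (cube a b) < +oo)%E.
  by rewrite cube_box mu_leb => [|j]; rewrite ?ltey // !tnth_mktuple ltW.
have mg th : measurable_fun (cube a b) (fun x => phi (th, x) * p x).
  by apply: measurable_funM => //; exact: measurable_fun_pairE.
have gL := locally_unif_lipschitz_bounded_mul d_gt0 p_bd phi_loc phi_lip.
split.
  apply: (locally_lipschitz_Rintegral mC C_fin mg gL (S := fun=> cube a b)) => [_|_|th _] //.
  by exists 1; split => //; exists 0 => th1 th2 _ _; rewrite setDv measure0 mul0r.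
move=> i; apply: (locally_lipschitz_Rintegral mC C_fin mg gL).
- by move=> th; exact: Iset_measurable.
- by move=> th; exact: Iset_sub_cube.
- by move=> th; exact: Iset_setD_lipschitz.
Qed.
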